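(* Let $p$ be an odd prime and let $q\in\mathbb C_p$ with $|1-q|_p<p^{-1/(p-1)}$. For every $n\in\mathbb Z_+=\{0,1,2,\dots\}$, $$E_{n,q}=\sum_{k=0}^n\sum_{m=0}^k\sum_{l=m}^k q^{\binom k2}s_{2,q}(n,k)\,(q-1)^{m-k}\binom kl_q q^{\binom l2+l(1-k)}\binom lm(-1)^{l+k}E_{m,q}.$$
   Context: $\mathbb Z_p,\mathbb C_p$ denote the $p$-adic integers and the completion of an algebraic closure of $\mathbb Q_p$; $|\cdot|_p$ is normalized by $|p|_p=p^{-1}$. For $x\in\mathbb Z_p$, $[x]_q=\frac{1-q^x}{1-q}$. The fermionic $p$-adic integral of a uniformly differentiable $f:\mathbb Z_p\to\mathbb C_p$ is $\int_{\mathbb Z_p}f(x)\,d\mu_{-1}(x)=\lim_{N\to\infty}\sum_{x=0}^{p^N-1}f(x)(-1)^x$. The $q$-Euler numbers are $E_{n,q}=\int_{\mathbb Z_p}[x]_q^n\,d\mu_{-1}(x)$ (equivalently $E_{n,q}=\frac{2}{(1-q)^n}\sum_{l=0}^n\binom nl(-1)^l\frac{1}{1+q^l}$). $[n]_q!=[n]_q[n-1]_q\cdots[1]_q$ ($[0]_q!=1$) and $\binom kl_q=\frac{[k]_q!}{[l]_q![k-l]_q!}$; $\binom lm$ is the ordinary binomial coefficient. The $q$-Stirling numbers of the second kind $s_{2,q}(n,k)$ are the coefficients in the identity $[x]_q^n=\sum_{k=0}^n q^{\binom k2}s_{2,q}(n,k)\,[x]_q[x-1]_q\cdots[x-k+1]_q$,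 viewed as an identity of polynomials in $[x]_q$ (using $[x-i]_q=q^{-i}([x]_q-[i]_q)$). *)

From HB Require Import structures.
From mathcomp Require Import all_boot all_order all_algebra all_field.
From mathcomp Require Import all_classical all_reals all_analysis.
Set Implicit Arguments. Unset Strict Implicit. Unset Printing Implicit Defensive.
Import Order.TTheory GRing.Theory Num.Theory.
Local Open Scope ring_scope.

Definition nonarch_abs (R : realType) (K : fieldType) (abs : K -> R) : Prop :=
  [/\ forall x, 0 <= abs x,
      forall x, abs x = 0 <-> x = 0,
      forall x y, abs (x * y) = abs x * abs y
    & forall x y, abs (x + y) <= Num.max (abs x) (abs y)].

Definition abs_complete (R : realType) (K : fieldType) (abs : K -> R) : Prop :=
  forall u : nat -> K,
    (forall e : R, 0 < e -> exists N, forall m n, (N <= m)%N -> (N <= n)%N ->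
        abs (u m - u n) < e) ->
    exists l, forall e : R, 0 < e -> exists N, forall n, (N <= n)%N ->
        abs (u n - l) < e.

(* K behaves like C_p: an algebraically closed (K is a closedFieldType),
   characteristic 0 field, complete for a nonarchimedean absolute value
   normalized by |p|_p = p^-1.  Such a K contains C_p isometrically. *)
Definition Cp_like (R : realType) (K : fieldType) (p : nat) (abs : K -> R) : Prop :=
  [/\ nonarch_abs abs, abs_complete abs,
      abs (p%:R) = (p%:R)^-1
    & [pchar K] =i pred0].

Definition qint (K : fieldType) (q : K) (x : nat) : K := (1 - q ^+ x) / (1 - q).

Definition qfact (K : fieldType) (q : K) (n : nat) : K :=
  \prod_(1 <= i < n.+1) qint q i.
Definition qbinom (K : fieldType) (q : K) (k l : nat) : K :=
  qfact q k / (qfact q l * qfact q (k - l)).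

Definition fermionic_integral_is (R : realType) (K : fieldType) (p : nat)
    (abs : K -> R) (f : nat -> K) (l : K) : Prop :=
  forall e : R, 0 < e -> exists N0, forall N, (N0 <= N)%N ->
    abs ((\sum_(x < p ^ N) f x * (-1) ^+ x) - l) < e.

Definition is_qEuler (R : realType) (K : fieldType) (p : nat) (abs : K -> R)
    (q : K) (E : nat -> K) : Prop :=
  forall n, fermionic_integral_is p abs (fun x => qint q x ^+ n) (E n).

(* s n k = s_{2,q}(n,k): coefficients in the identity of polynomials in t = [x]_q
   t^n = sum_{k=0}^n q^{binom k 2} s_{2,q}(n,k) prod_{i<k} [x-i]_q,
   with [x-i]_q = q^{-i} (t - [i]_q). *)
Definition is_qStirling2 (K : fieldType) (q : K) (s : nat -> nat -> K) : Prop :=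
  forall n : nat, ('X^n : {poly K}) =
    \sum_(k < n.+1) (q ^+ 'C(k, 2) * s n k) *:
       \prod_(i < k) ((q ^- i) *: ('X - (qint q i)%:P)).

(* Expanding [[x]_q^n] with the q-Stirling numbers leaves the products
   [prod_(i < k) q^-i ([x]_q - [i]_q)].  With [y = 1 + (q - 1) [x]_q = q^x] such a
   product is [(1 - q)^-k prod_(j < k) (1 - y q^(1 - k + j))], which the q-binomial
   theorem expands in powers of [y]; the binomial theorem re-expands
   [y^l = (1 + (q - 1) [x]_q)^l] in powers of [[x]_q], and integrating term by term
   gives the formula.  The hypothesis on [|1 - q|_p] only ensures that [q^i <> 1] for
   [i > 0], so that [qbinom] (defined by division) is the Gaussian binomial: near [1]
   there are no nontrivial roots of unity, because [|(1 + c)^m - 1| = |c|] when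
   [p] does not divide [m], while [|(1 + c)^p - 1| = |c| / p] strictly shrinks [c]. *)

From HB Require Import structures.
From mathcomp Require Import all_boot all_order all_algebra all_field.
From mathcomp Require Import all_classical all_reals all_analysis.
From mathcomp Require Import ring zify.
Set Implicit Arguments. Unset Strict Implicit. Unset Printing Implicit Defensive.
Import Order.TTheory GRing.Theory Num.Theory.
Local Open Scope ring_scope.

Section GaussBinomial.
Variables (K : fieldType) (q : K).

(* The q-Pascal recurrence; unlike [qbinom] it needs no division. *)
Fixpoint gauss_binom (k l : nat) : K :=
  match k, l with
  | _, 0 => 1
  | 0, _.+1 => 0
  | k'.+1, l'.+1 => q ^+ l'.+1 * gauss_binom k' l'.+1 + gauss_binom k' l'
  end.

Lemma gauss_binomn0 k : gauss_binom k 0 = 1. Proof. by case: k. Qed.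

Lemma gauss_binom_small k l : (k < l)%N -> gauss_binom k l = 0.
Proof.
elim: k l => [|k IH] [|l] //= ltkl.
by rewrite !IH ?mulr0 ?addr0 // ltnW.
Qed.

Lemma gauss_binomnn k : gauss_binom k k = 1.
Proof. by elim: k => //= k ->; rewrite gauss_binom_small // mulr0 add0r. Qed.

Lemma q_binomial_theorem k z :
  \prod_(j < k) (1 + z * q ^+ j) =
  \sum_(l < k.+1) gauss_binom k l * q ^+ 'C(l, 2) * z ^+ l.
Proof.
elim: k z => [|k IH] z; first by rewrite big_ord0 big_ord1 /= !expr0 !mulr1.
rewrite big_ord_recl /= expr0 mulr1.
have -> : \prod_(i < k) (1 + z * q ^+ (lift ord0 i)) =
          \prod_(i < k) (1 + (z * q) * q ^+ i).
  by apply: eq_bigr => i _; rewrite lift0 exprS mulrA.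
rewrite IH [in RHS]big_ord_recl /= ?gauss_binomn0 !expr0 !mulr1.
have -> : \sum_(i < k.+1) gauss_binom k.+1 (lift ord0 i) *
      q ^+ 'C(lift ord0 i, 2) * z ^+ lift ord0 i =
    \sum_(i < k.+1) (q ^+ i.+1 * gauss_binom k i.+1 * q ^+ 'C(i.+1, 2) * z ^+ i.+1)
  + \sum_(i < k.+1) (gauss_binom k i * q ^+ 'C(i.+1, 2) * z ^+ i.+1).
  by rewrite -big_split; apply: eq_bigr => i _ /=; rewrite ?lift0 /= !mulrDl.
rewrite mulrDl mul1r addrA; congr (_ + _).
  rewrite big_ord_recl big_ord_recr /= gauss_binomn0 gauss_binom_small //.
  rewrite mulr0 !mul0r addr0 !expr0 !mulr1.
  congr (_ + _); apply: eq_bigr => i _; rewrite /bump /= add1n exprMn; ring.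
rewrite mulr_sumr; apply: eq_bigr => i _.
rewrite binS bin1 exprD exprMn exprS; ring.
Qed.

Lemma qfact0 : qfact q 0 = 1.
Proof. by rewrite /qfact big_geq. Qed.

Lemma qfactS n : qfact q n.+1 = qfact q n * qint q n.+1.
Proof. by rewrite /qfact big_nat_recr. Qed.

Lemma qintD a b : qint q (a + b) = qint q a + q ^+ a * qint q b.
Proof. by rewrite /qint mulrA -mulrDl exprD; congr (_ / _); ring. Qed.

Lemma qfact_gauss_binom k l : (l <= k)%N ->
  qfact q k = gauss_binom k l * qfact q l * qfact q (k - l).
Proof.
elim: k l => [|k IH] [|l] //= lek.
- by rewrite qfact0 !mul1r.
- by rewrite qfact0 subn0 !mul1r.
have [ltlk|lekl] := ltnP l k; last first.
  have -> : l = k by lia.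
  by rewrite gauss_binomnn gauss_binom_small // subnn qfact0 mulr0 add0r mul1r mulr1.
have eS := IH l.+1 ltlk; have e := IH l (ltnW ltlk).
have kl : (k - l = (k - l.+1).+1)%N by lia.
rewrite subSS kl !qfactS -kl.
have -> : qint q k.+1 = qint q l.+1 + q ^+ l.+1 * qint q (k - l).
  by rewrite -qintD; congr qint; lia.
rewrite mulrDr {1}e {1}eS kl !qfactS -kl; ring.
Qed.

Hypothesis qX_neq1 : forall i, (0 < i)%N -> q ^+ i != 1.

Lemma qint_neq0 i : (0 < i)%N -> qint q i != 0.
Proof.
move=> i_gt0; rewrite /qint mulf_neq0 ?invr_eq0 // subr_eq0 eq_sym ?qX_neq1 //.
by rewrite -[q]expr1 qX_neq1.
Qed.

Lemma qfact_neq0 k : qfact q k != 0.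
Proof.
elim: k => [|k IH]; first by rewrite qfact0 oner_eq0.
by rewrite qfactS mulf_neq0 ?qint_neq0.
Qed.

Lemma qbinom_gauss_binom k l : (l <= k)%N -> qbinom q k l = gauss_binom k l.
Proof.
move=> lek; rewrite /qbinom (qfact_gauss_binom lek).
by rewrite -[gauss_binom k l * _ * _]mulrA mulfK // mulf_neq0 ?qfact_neq0.
Qed.

End GaussBinomial.

Lemma exprD1n_widen (R : pzSemiRingType) (x : R) l k : (l <= k)%N ->
  (x + 1) ^+ l = \sum_(m < k.+1) x ^+ m *+ 'C(l, m).
Proof.
move=> lek; rewrite exprD1n.
rewrite (big_ord_widen _ (fun m => x ^+ m *+ 'C(l, m)) (_ : l < k.+1)%N) //.
rewrite [RHS](bigID (fun m : 'I_k.+1 => (m < l.+1)%N)) /=.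
by rewrite [X in _ + X]big1 ?addr0 // => m; rewrite -leqNgt => /bin_small ->.
Qed.

Section QFalling.
Variables (K : fieldType) (q : K).
Hypotheses (q_neq0 : q != 0) (qX_neq1 : forall i, (0 < i)%N -> q ^+ i != 1).

Lemma prod_qfalling k t :
  \prod_(i < k) (q ^- i * (t - qint q i)) =
  \sum_(l < k.+1) (q - 1) ^ (- k%:Z) * gauss_binom q k l
     * q ^ ('C(l, 2)%:Z + l%:Z * (1 - k%:Z)) * (-1) ^+ (l + k)
     * (1 + (q - 1) * t) ^+ l.
Proof.
(* With [y = 1 + (q - 1) t] each factor is [(1 - y q^-i) / (1 - q)]; reversed,
   they form the q-binomial product with [z = - y q^(1 - k)]. *)
have q_neq1 : q != 1 by rewrite -[q]expr1 qX_neq1.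
set y := 1 + (q - 1) * t; set w := q ^ (1 - k%:Z).
have factor_out : \prod_(i < k) (q ^- i * (t - qint q i)) =
    (1 - q)^-1 ^+ k * \prod_(i < k) (1 - y * q ^- i).
  rewrite -[k in _ ^+ k]card_ord -prodr_const -big_split; apply: eq_bigr => i _ /=.
  by rewrite /qint /y; field; rewrite expf_neq0 // subr_eq0 eq_sym q_neq1.
have reverse : \prod_(i < k) (1 - y * q ^- i) = \prod_(j < k) (1 + (- y * w) * q ^+ j).
  rewrite (reindex_inj rev_ord_inj) /=; apply: eq_bigr => j _.
  have -> : q ^- (k - j.+1) = w * q ^+ j.
    rewrite /w exprnN exprnP -expfzDr //; congr (_ ^ _).
    by have := ltn_ord j; lia.
  ring.
rewrite factor_out reverse q_binomial_theorem mulr_sumr; apply: eq_bigr => l _.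
have -> : (1 - q)^-1 ^+ k = (-1) ^+ k * (q - 1) ^ (- k%:Z).
  by rewrite -exprnN -exprVn -exprMn mulN1r -invrN opprB.
rewrite expfzDr // [l%:Z * _]mulrC -exprz_exp -!exprnP exprD exprMn /w.
by rewrite [(- y) ^+ l]exprNn; ring.
Qed.

Lemma prod_qfalling_expand k t :
  \prod_(i < k) (q ^- i * (t - qint q i)) =
  \sum_(m < k.+1) \sum_(m <= l < k.+1)
     ((q - 1) ^ (m%:Z - k%:Z) * qbinom q k l * q ^ ('C(l, 2)%:Z + l%:Z * (1 - k%:Z))
      * ('C(l, m))%:R * (-1) ^+ (l + k)) * t ^+ m.
Proof.
have a_neq0 : q - 1 != 0 by rewrite subr_eq0 -[q]expr1 qX_neq1.
set T := fun m l : nat => (q - 1) ^ (m%:Z - k%:Z) * qbinom q k l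
   * q ^ ('C(l, 2)%:Z + l%:Z * (1 - k%:Z)) * ('C(l, m))%:R * (-1) ^+ (l + k) * t ^+ m.
have full_range m : (m < k.+1)%N -> \sum_(m <= l < k.+1) T m l = \sum_(l < k.+1) T m l.
  move=> ltmk; rewrite -(big_mkord xpredT (T m)).
  rewrite [RHS](@big_cat_nat _ _ _ m) ?(ltnW ltmk) //=.
  rewrite [X in _ = X + _]big1_seq ?add0r // => l.
  rewrite mem_index_iota => /andP[_ ltlm].
  by rewrite /T (bin_small ltlm) !(mulr0, mul0r).
transitivity (\sum_(m < k.+1) \sum_(l < k.+1) T m l); last first.
  by apply: eq_bigr => m _; symmetry; exact: full_range.
rewrite prod_qfalling exchange_big; apply: eq_bigr => l _.
have lelk : (l <= k)%N := ltnSE (ltn_ord l).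
rewrite [1 + _ * t]addrC (exprD1n_widen _ lelk) mulr_sumr; apply: eq_bigr => m _.
rewrite /T qbinom_gauss_binom // [(q - 1) ^ (_ + _)]expfzDr // -exprnP exprMn.
by rewrite -mulr_natr; ring.
Qed.

Lemma qStirling2_expansion s n t : is_qStirling2 q s ->
  t ^+ n = \sum_(k < n.+1) \sum_(m < k.+1) \sum_(m <= l < k.+1)
     (q ^+ 'C(k, 2) * s n k * (q - 1) ^ (m%:Z - k%:Z) * qbinom q k l
      * q ^ ('C(l, 2)%:Z + l%:Z * (1 - k%:Z)) * ('C(l, m))%:R * (-1) ^+ (l + k)) * t ^+ m.
Proof.
move=> /(_ n)/(congr1 (horner^~ t)); rewrite hornerXn horner_sum => ->.
apply: eq_bigr => k _; rewrite hornerZ horner_prod.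
under eq_bigr => i _ do rewrite hornerZ hornerXsubC.
rewrite prod_qfalling_expand mulr_sumr; apply: eq_bigr => m _.
by rewrite mulr_sumr; apply: eq_bigr => l _; rewrite !mulrA.
Qed.

End QFalling.

Lemma exprD1n_sub1 (R : pzRingType) (c : R) m : (0 < m)%N ->
  (1 + c) ^+ m - 1 = c *+ m + \sum_(i < m.-1) c ^+ i.+2 *+ 'C(m, i.+2).
Proof.
case: m => // m _; rewrite [1 + c]addrC exprD1n !big_ord_recl /= expr0 bin0 expr1 bin1.
by rewrite addrAC subrr add0r.
Qed.

(* Below this radius [abs (c ^+ p) < abs (p%:R * c)], so that [(1 + c) ^+ p - 1]
   has the size of [p%:R * c]. *)
Definition unity_radius (R : realType) (p : nat) : R := (p%:R : R) `^ (- (p.-1)%:R^-1).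

Section Ultrametric.
Variables (R : realType) (K : fieldType) (abs : K -> R).
Hypothesis abs_nonarch : nonarch_abs abs.

Lemma abs_ge0 x : 0 <= abs x. Proof. by case: abs_nonarch. Qed.
Lemma abs_eq0 x : abs x = 0 <-> x = 0. Proof. by case: abs_nonarch. Qed.
Lemma absM x y : abs (x * y) = abs x * abs y. Proof. by case: abs_nonarch. Qed.
Lemma absD x y : abs (x + y) <= Num.max (abs x) (abs y). Proof. by case: abs_nonarch. Qed.

Lemma abs0 : abs 0 = 0. Proof. exact/abs_eq0. Qed.

Lemma abs_gt0 x : x != 0 -> 0 < abs x.
Proof. by move=> /eqP x_neq0; rewrite lt_def abs_ge0 andbT; apply/eqP => /abs_eq0. Qed.

Lemma abs1 : abs 1 = 1.
Proof.
have abs1_neq0 : abs 1 != 0 by rewrite gt_eqF ?abs_gt0 ?oner_eq0.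
by apply: (mulfI abs1_neq0); rewrite -absM !mulr1.
Qed.

Lemma absN1 : abs (-1) = 1.
Proof.
have : abs (-1) ^+ 2 == 1 by rewrite expr2 -absM mulrNN mulr1 abs1.
rewrite sqrf_eq1 => /orP[/eqP // | /eqP absN1_eq].
by have := abs_ge0 (-1); rewrite absN1_eq ler0N1.
Qed.

Lemma absN x : abs (- x) = abs x.
Proof. by rewrite -mulN1r absM absN1 mul1r. Qed.

Lemma absX x n : abs (x ^+ n) = abs x ^+ n.
Proof. by elim: n => [|n IH]; rewrite ?expr0 ?abs1 // !exprS absM IH. Qed.

Lemma absD_le x y e : abs x <= e -> abs y <= e -> abs (x + y) <= e.
Proof. by move=> hx hy; apply: le_trans (absD x y) _; rewrite ge_max hx hy. Qed.

Lemma absD_lt x y e : abs x < e -> abs y < e -> abs (x + y) < e.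
Proof. by move=> hx hy; apply: le_lt_trans (absD x y) _; rewrite gt_max hx hy. Qed.

Lemma abs_sum_lt (I : Type) (r : seq I) (P : pred I) (F : I -> K) e :
  0 < e -> (forall i, P i -> abs (F i) < e) -> abs (\sum_(i <- r | P i) F i) < e.
Proof.
by move=> e_gt0 hF; elim/big_ind: _ => //; [rewrite abs0 | move=> x y; exact: absD_lt].
Qed.

Lemma absD_eqr x y : abs x < abs y -> abs (x + y) = abs y.
Proof.
move=> ltxy; apply/eqP; rewrite eq_le absD_le ?(ltW ltxy) //=.
rewrite leNgt; apply/negP => ltxyy.
have : abs ((x + y) + (- x)) < abs y by apply: absD_lt; rewrite ?absN.
by rewrite addrC addKr ltxx.
Qed.

Lemma abs_natr_le1 n : abs n%:R <= 1.
Proof.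
elim: n => [|n IH]; first by rewrite abs0 ler01.
by rewrite mulrS; apply: absD_le; rewrite ?abs1.
Qed.

Lemma abs_intr_le1 (z : int) : abs z%:~R <= 1.
Proof. by case: z => n; rewrite ?NegzE ?mulrNz ?absN abs_natr_le1. Qed.

Section FermionicIntegral.
Variable p : nat.
Local Notation fint := (fermionic_integral_is p abs).

Lemma fermionic_integral_ext f g l : f =1 g -> fint f l -> fint g l.
Proof.
move=> efg hf e e_gt0; have [N hN] := hf e e_gt0; exists N => M leNM.
by under eq_bigr => i _ do rewrite -efg; exact: hN.
Qed.

Lemma fermionic_integral0 : fint (fun _ => 0) 0.
Proof.
move=> e e_gt0; exists 0%N => N _.
by rewrite big1 ?subrr ?abs0 // => i _; rewrite mul0r.
Qed.

Lemma fermionic_integralZ c f l : fint f l -> fint (fun x => c * f x) (c * l).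
Proof.
move=> hf e e_gt0; have [->|c_neq0] := eqVneq c 0.
  exists 0%N => N _; rewrite big1 => [|i _]; last by rewrite !mul0r.
  by rewrite mul0r subrr abs0.
have c_gt0 := abs_gt0 c_neq0.
have [N hN] := hf (e / abs c) (divr_gt0 e_gt0 c_gt0); exists N => M leNM.
have -> : \sum_(x < p ^ M) c * f x * (-1) ^+ x - c * l =
          c * (\sum_(x < p ^ M) f x * (-1) ^+ x - l).
  by rewrite mulrBr mulr_sumr; congr (_ - _); apply: eq_bigr => i _; rewrite mulrA.
by rewrite absM -ltr_pdivlMl // mulrC; exact: hN.
Qed.

Lemma fermionic_integralD f g lf lg :
  fint f lf -> fint g lg -> fint (fun x => f x + g x) (lf + lg).
Proof.
move=> hf hg e e_gt0; have [Nf hNf] := hf e e_gt0; have [Ng hNg] := hg e e_gt0.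
exists (maxn Nf Ng) => M leNM.
have -> : \sum_(x < p ^ M) (f x + g x) * (-1) ^+ x - (lf + lg) =
  (\sum_(x < p ^ M) f x * (-1) ^+ x - lf) + (\sum_(x < p ^ M) g x * (-1) ^+ x - lg).
  by under eq_bigr => i _ do rewrite mulrDl; rewrite big_split /=; ring.
by apply: absD_lt => //; [apply: hNf | apply: hNg]; lia.
Qed.

Lemma fermionic_integral_sum (I : Type) (r : seq I) (P : pred I)
    (f : I -> nat -> K) (l : I -> K) :
  (forall i, P i -> fint (f i) (l i)) ->
  fint (fun x => \sum_(i <- r | P i) f i x) (\sum_(i <- r | P i) l i).
Proof.
move=> hf; elim: r => [|a r IH].
  rewrite big_nil; apply: fermionic_integral_ext fermionic_integral0 => x.
  by rewrite big_nil.
rewrite big_cons; case: ifP => Pa; last first.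
  by apply: fermionic_integral_ext IH => x; rewrite big_cons Pa.
apply: fermionic_integral_ext (fermionic_integralD (hf a Pa) IH) => x.
by rewrite big_cons Pa.
Qed.

Lemma fermionic_integral_unique f l1 l2 : fint f l1 -> fint f l2 -> l1 = l2.
Proof.
move=> h1 h2; apply/eqP/negPn/negP => l12_neq.
have e_gt0 : 0 < abs (l1 - l2) by apply: abs_gt0; rewrite // subr_eq0.
have [N1 hN1] := h1 _ e_gt0; have [N2 hN2] := h2 _ e_gt0.
set S := \sum_(x < p ^ maxn N1 N2) f x * (-1) ^+ x.
have : abs ((S - l2) - (S - l1)) < abs (l1 - l2).
  by apply: absD_lt => //; rewrite ?absN //; [apply: hN2 | apply: hN1]; lia.
have -> : S - l2 - (S - l1) = l1 - l2 by ring.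
by rewrite ltxx.
Qed.

End FermionicIntegral.

Section RootsOfUnity.
Variable p : nat.
Hypothesis p_prime : prime p.
Hypothesis abs_p : abs p%:R = p%:R^-1.

Let p_gt0 : (0 < p%:R :> R). Proof. by rewrite ltr0n prime_gt0. Qed.
Let pV_lt1 : (p%:R^-1 < 1 :> R). Proof. by rewrite invf_lt1 // ltr1n prime_gt1. Qed.
Local Notation rp := (unity_radius R p).

Lemma abs_natr_coprime m : ~~ (p %| m)%N -> abs m%:R = 1.
Proof.
move=> p_ndvd; apply/eqP; rewrite eq_le abs_natr_le1 //= leNgt; apply/negP => lt_m1.
have [u [v uv]] := Bezoutz m%:Z p%:Z.
have gcd1 : gcdz m%:Z p%:Z = 1.
  have : coprime p m by rewrite prime_coprime.
  by rewrite /coprime gcdnC => /eqP; rewrite /gcdz /= => ->.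
have : ((u * m%:Z + v * p%:Z)%:~R : K) = 1 by rewrite uv gcd1.
rewrite intrD !intrM -!pmulrn => bezout.
have : abs (1 : K) < 1.
  rewrite -bezout; apply: absD_lt => //; rewrite absM.
    by apply: le_lt_trans lt_m1; rewrite ler_piMl ?abs_ge0 ?abs_intr_le1.
  rewrite abs_p; apply: le_lt_trans pV_lt1.
  by rewrite ler_piMl ?abs_intr_le1 // invr_ge0 ler0n.
by rewrite abs1 ltxx.
Qed.

Lemma abs_natr_dvd m : (p %| m)%N -> abs m%:R <= p%:R^-1.
Proof.
case/dvdnP => k ->; rewrite natrM absM abs_p.
by rewrite ler_piMl ?abs_natr_le1 // invr_ge0 ler0n.
Qed.

Lemma unity_radius_expn : rp ^+ p.-1 = p%:R^-1.
Proof.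
rewrite /unity_radius -powR_mulrn ?powR_ge0 // -powRrM mulNr mulVf.
  by rewrite powRN powRr1 // ltW.
by rewrite pnatr_eq0 -lt0n -ltnS prednK ?prime_gt0 ?prime_gt1.
Qed.

Lemma unity_radius_lt1 : rp < 1.
Proof.
rewrite ltNge; apply/negP => /(exprn_ege1 p.-1); rewrite unity_radius_expn => le1pV.
by have := lt_le_trans pV_lt1 le1pV; rewrite ltxx.
Qed.

Lemma abs_exprSS_le x n : abs x <= 1 -> abs (x ^+ n.+2) <= abs x ^+ 2.
Proof. by move=> x_le1; rewrite absX; apply: ler_wiXn2l; rewrite ?abs_ge0. Qed.

Lemma abs_exprD1n_sub1_coprime m c : ~~ (p %| m)%N -> 0 < abs c -> abs c < 1 ->
  abs ((1 + c) ^+ m - 1) = abs c.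
Proof.
move=> p_ndvd c_gt0 c_lt1; have m_gt0 : (0 < m)%N by case: m p_ndvd; rewrite ?dvdn0.
have absc_m : abs (c *+ m) = abs c.
  by rewrite -[c *+ m]mulr_natr absM abs_natr_coprime ?mulr1.
rewrite exprD1n_sub1 // addrC absD_eqr // absc_m.
apply: abs_sum_lt => // i _; rewrite -mulr_natr absM.
apply: le_lt_trans (_ : abs c ^+ 2 < abs c); last by rewrite expr2 gtr_pMl.
apply: le_trans (abs_exprSS_le i (ltW c_lt1)).
by rewrite ler_piMr ?abs_ge0 ?abs_natr_le1.
Qed.

Lemma abs_exprD1p_sub1 c : 0 < abs c -> abs c < rp ->
  abs ((1 + c) ^+ p - 1) = abs c / p%:R.
Proof.
move=> c_gt0 c_lt_rp; have c_lt1 := lt_trans c_lt_rp unity_radius_lt1.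
have absc_p : abs (c *+ p) = abs c / p%:R by rewrite -[c *+ p]mulr_natr absM abs_p.
rewrite exprD1n_sub1 ?prime_gt0 // addrC absD_eqr // absc_p.
apply: abs_sum_lt => [|i _]; first by rewrite divr_gt0.
have [ltip|lepi] := ltnP i.+2 p.
  rewrite -mulr_natr absM (@le_lt_trans _ _ (abs c ^+ 2 / p%:R)) //.
    by rewrite ler_pM ?abs_ge0 ?abs_exprSS_le ?abs_natr_dvd ?prime_dvd_bin ?ltW.
  by rewrite ltr_pM2r ?invr_gt0 // expr2 gtr_pMl.
have -> : i.+2 = p by have := ltn_ord i; lia.
rewrite binn mulr1n absX -(prednK (prime_gt0 p_prime)) exprS ltr_pM2l //.
rewrite prednK ?prime_gt0 // -unity_radius_expn ltrXn2r ?abs_ge0 ?powR_ge0 //.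
by rewrite -lt0n -ltnS prednK ?prime_gt0 ?prime_gt1.
Qed.

Lemma exprD1n_neq1 m c : (0 < m)%N -> c != 0 -> abs c < rp -> (1 + c) ^+ m != 1.
Proof.
elim/ltn_ind: m c => m IH c m_gt0 c_neq0 c_lt_rp.
have c_gt0 := abs_gt0 c_neq0.
have [p_dvd|p_ndvd] := boolP (p %| m)%N; last first.
  have c_lt1 := lt_trans c_lt_rp unity_radius_lt1.
  have : abs ((1 + c) ^+ m - 1) != 0 by rewrite abs_exprD1n_sub1_coprime // gt_eqF.
  by apply: contra_neq => ->; rewrite subrr abs0.
(* Otherwise [(1 + c) ^+ m = (1 + c') ^+ (m %/ p)] with a smaller nonzero [c']. *)
set c' := (1 + c) ^+ p - 1.
have c'_abs := abs_exprD1p_sub1 c_gt0 c_lt_rp.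
have c'_lt_c : abs c' < abs c by rewrite c'_abs ltr_pdivrMr // ltr_pMr // ltr1n prime_gt1.
have -> : (1 + c) ^+ m = (1 + c') ^+ (m %/ p).
  by rewrite [1 + c']addrC subrK -exprM mulnC divnK.
apply: IH.
- by rewrite ltn_Pdiv ?prime_gt1.
- by rewrite divn_gt0 ?prime_gt0 // dvdn_leq.
- by apply/eqP => /abs_eq0/eqP; rewrite c'_abs gt_eqF // divr_gt0.
- exact: lt_trans c_lt_rp.
Qed.

End RootsOfUnity.

End Ultrametric.

Theorem mainTheorem1 (R : realType) (K : closedFieldType) (abs : K -> R)
    (p : nat) (q : K) (E : nat -> K) (s : nat -> nat -> K) :
  prime p -> odd p ->
  Cp_like p abs ->
  q != 1 ->
  abs (1 - q) < (p%:R : R) `^ (- ((p.-1)%:R)^-1) ->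
  is_qEuler p abs q E ->
  is_qStirling2 q s ->
  forall n : nat,
    E n = \sum_(k < n.+1) \sum_(m < k.+1) \sum_(m <= l < k.+1)
            q ^+ 'C(k, 2) * s n k * (q - 1) ^ (m%:Z - k%:Z) * qbinom q k l
            * q ^ ('C(l, 2)%:Z + l%:Z * (1 - k%:Z)) * ('C(l, m))%:R
            * (-1) ^+ (l + k) * E m.
Proof.
move=> p_prime _ [abs_nonarch _ abs_p _] q_neq1 q_near1 qEuler qStirling n.
have q1_lt_rp : abs (q - 1) < unity_radius R p by rewrite -opprB absN.
have qX_neq1 i : (0 < i)%N -> q ^+ i != 1.
  move=> i_gt0; have := exprD1n_neq1 abs_nonarch p_prime abs_p i_gt0 _ q1_lt_rp.
  by rewrite [1 + _]addrC subrK; apply; rewrite subr_eq0.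
have q_neq0 : q != 0.
  apply: contraTneq q_near1 => ->; rewrite subr0 abs1 // -leNgt.
  exact/ltW/unity_radius_lt1.
apply: (fermionic_integral_unique abs_nonarch (qEuler n)).
apply: fermionic_integral_ext
  (fun x => esym (qStirling2_expansion q_neq0 qX_neq1 n (qint q x) qStirling)) _.
do 3 apply: (fermionic_integral_sum abs_nonarch) => ? _.
exact: (fermionic_integralZ abs_nonarch).
Qed.
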